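(* Under the assumptions of the context, there is a neighborhood $V$ of $\bar\xi$ such that for each $\xi\in V$ one of the following holds: either \[ \bar\Delta(t,\xi)=|t-\nu_2(\xi)|^2\,(t-\nu_1(\xi))\quad\text{with }\nu_1(\xi)\in\mathbb R,\ \nu_1(\xi)\le0, \] or \[ \bar\Delta(t,\xi)=\prod_{k=1}^3(t-\nu_k(\xi))\quad\text{with all }\nu_k(\xi)\in\mathbb R,\ \nu_k(\xi)\le0 . \]
   Context: Let $a(t,\xi),b(t,\xi)$ be real-valued $C^\infty$ functions on $(-c,T)\times(\mathbb R^n\setminus\{0\})$, homogeneous of degree $0$ in $\xi$, with $\Delta:=4a^3-27b^2\ge0$ for $t\in[0,T)$. Let $|\bar\xi|=1$ with $a(0,\bar\xi)=0$, $\partial_ta(0,\bar\xi)\ne0$. Near $(0,\bar\xi)$ write $\Delta(t,\xi)=e_2(t,\xi)\bar\Delta(t,\xi)$ with $e_2>0$ smooth and $\bar\Delta(t,\xi)=t^3+a_1(\xi)t^2+a_2(\xi)t+a_3(\xi)$, $a_j$ smooth real-valued with $a_j(\bar\xi)=0$; $\nu_k(\xi)$ denote the roots in $t$ of $\bar\Delta(t,\xi)=0$. *)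

From HB Require Import structures.
From mathcomp Require Import all_boot all_order all_algebra.
From mathcomp Require Import all_classical all_reals all_analysis.
Set Implicit Arguments. Unset Strict Implicit. Unset Printing Implicit Defensive.
Import Order.TTheory GRing.Theory Num.Theory.
Import numFieldNormedType.Exports.
Local Open Scope classical_set_scope.
Local Open Scope ring_scope.

Section Smooth.
Variables (R : realType) (V : normedModType R).

Definition iter_dirs (dirs : seq V) (f : V -> R) : V -> R :=
  foldr (fun v g => derive g ^~ v) f dirs.

Definition smooth_on (U : set V) (f : V -> R) : Prop :=
  forall (dirs : seq V),
    (forall x v, U x -> derivable (iter_dirs dirs f) x v) /\
    (forall x, U x -> {for x, continuous (iter_dirs dirs f)}).
End Smooth.

Definition sqnorm (R : realType) (n : nat) (xi : 'rV[R]_n) : R :=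
  \sum_(i < n) xi ord0 i ^+ 2.

Definition cubic (R : realType) (a1 a2 a3 : R) (t : R) : R :=
  t ^+ 3 + a1 * t ^+ 2 + a2 * t + a3.

From HB Require Import structures.
From mathcomp Require Import all_boot all_order all_algebra.
From mathcomp Require Import all_classical all_reals all_analysis.
From mathcomp Require Import polyrcf ring lra.
Set Implicit Arguments. Unset Strict Implicit. Unset Printing Implicit Defensive.
Import Order.TTheory GRing.Theory Num.Theory.
Import numFieldNormedType.Exports.
Local Open Scope classical_set_scope.
Local Open Scope ring_scope.

(* Proof of Lemma 4.3.
   Shrinking W to a product strip [0, d) x B, every cubic
   Delta_bar(., xi) with xi in a smaller neighbourhood of xib has
   coefficients small compared with d (so all its real roots lie below d)
   and is nonnegative on [0, d).  An elementary algebraic analysis then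
   shows that such a cubic either has a nonpositive real root and a pair
   of conjugate roots, or three nonpositive real roots.
   The file first proves the sign analysis for a product of three linear
   factors, then the facts about monic real cubics (a real root exists,
   roots are bounded by the coefficients, factorisation), and finally the
   topological shrinking argument and the theorem. *)

(* The conclusion of the lemma for a real function f (in practice a
   monic cubic): either f = |t - nu2|^2 (t - nu1) with nu1 <= 0 and
   nu2 = x + iy, or f has three nonpositive real roots. *)
Definition nonpos_root_factorization (R : realFieldType) (f : R -> R) : Prop :=
  (exists nu1 x y : R, nu1 <= 0 /\
     forall t : R, f t = ((t - x) ^+ 2 + y ^+ 2) * (t - nu1))
  \/
  (exists nu1 nu2 nu3 : R, [/\ nu1 <= 0, nu2 <= 0 & nu3 <= 0] /\
     forall t : R, f t = (t - nu1) * (t - nu2) * (t - nu3)).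

Section ThreeRealRoots.
Variable R : realFieldType.

Lemma sorted_roots_sign (d u1 u2 u3 : R) :
  u1 <= u2 -> u2 <= u3 -> u3 < d ->
  (forall t, 0 <= t < d -> 0 <= (t - u1) * (t - u2) * (t - u3)) ->
  u3 <= 0 \/ (u2 = u3 /\ u1 <= 0).
Proof.
move=> le12 le23 lt3d nonneg.
have [u3_le0|u3_gt0] := lerP u3 0; [by left | right].
have u23 : u2 = u3.
  (* otherwise the product is negative between max(u2, 0) and u3 *)
  apply/eqP; rewrite eq_le le23 /= leNgt; apply/negP => lt23.
  pose t := (Num.max u2 0 + u3) / 2.
  have [m2 m0] : u2 <= Num.max u2 0 /\ 0 <= Num.max u2 0.
    by rewrite !le_max !lexx ?orbT.
  have m3 : Num.max u2 0 < u3 by rewrite gt_max lt23.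
  have pos12 : 0 < (t - u1) * (t - u2) by apply: mulr_gt0; rewrite /t; lra.
  have := nonneg t; rewrite /t; have -> : 0 <= (Num.max u2 0 + u3) / 2 < d by lra.
  by rewrite pmulr_rge0 //; lra.
split=> //; subst u2.
(* evaluating at t = 0 gives - u1 u3^2 >= 0 *)
have d_gt0 : 0 < d by lra.
have := nonneg 0; rewrite lexx d_gt0 => /(_ isT).
have -> : (0 - u1) * (0 - u3) * (0 - u3) = - u1 * u3 ^+ 2 by ring.
by rewrite pmulr_lge0 ?exprn_gt0 // oppr_ge0.
Qed.

(* Consequently a function equal to such a product has the required
   root configuration: in the double-root case the pair is x +- 0i. *)
Lemma sorted_roots_factorization (d u1 u2 u3 : R) (f : R -> R) :
  u1 <= u2 -> u2 <= u3 -> u3 < d ->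
  (forall t, f t = (t - u1) * (t - u2) * (t - u3)) ->
  (forall t, 0 <= t < d -> 0 <= f t) -> nonpos_root_factorization f.
Proof.
move=> le12 le23 lt3d f_eq nonneg.
have [u3_le0|[u23 u1_le0]] : u3 <= 0 \/ (u2 = u3 /\ u1 <= 0).
- by apply: (sorted_roots_sign le12 le23 lt3d) => t /nonneg; rewrite f_eq.
- by right; exists u1, u2, u3; split=> //; split; lra.
- by left; exists u1, u3, 0; split=> // t; rewrite f_eq u23; ring.
Qed.

Lemma real_roots_factorization (d u1 u2 u3 : R) (f : R -> R) :
  u1 < d -> u2 < d -> u3 < d ->
  (forall t, f t = (t - u1) * (t - u2) * (t - u3)) ->
  (forall t, 0 <= t < d -> 0 <= f t) -> nonpos_root_factorization f.
Proof.
move=> lt1 lt2 lt3 f_eq nonneg.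
have sorted := sorted_roots_factorization (d := d) (f := f) _ _ _ _ nonneg.
have [le12|lt21] := lerP u1 u2; have [le23|lt32] := lerP u2 u3;
  have [le13|lt31] := lerP u1 u3.
- by apply: (sorted u1 u2 u3).
- lra.
- by apply: (sorted u1 u3 u2) => //; [lra | move=> t; rewrite f_eq; ring].
- by apply: (sorted u3 u1 u2) => //; [lra | move=> t; rewrite f_eq; ring].
- by apply: (sorted u2 u1 u3) => //; [lra | move=> t; rewrite f_eq; ring].
- by apply: (sorted u2 u3 u1) => //; [lra | move=> t; rewrite f_eq; ring].
- lra.
- by apply: (sorted u3 u2 u1) => //; [lra | lra | move=> t; rewrite f_eq; ring].
Qed.

End ThreeRealRoots.

Lemma monic_quadratic_cases (R : rcfType) (p q : R) :
  (exists x1 x2 : R, forall t, t ^+ 2 + p * t + q = (t - x1) * (t - x2)) \/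
  (0 < q /\ exists x y : R, forall t, t ^+ 2 + p * t + q = (t - x) ^+ 2 + y ^+ 2).
Proof.
pose D := p ^+ 2 - 4 * q.
have [D_ge0|D_lt0] := lerP 0 D.
  left; exists ((- p - Num.sqrt D) / 2), ((- p + Num.sqrt D) / 2) => t.
  have sqrtD : Num.sqrt D ^+ 2 = D by rewrite sqr_sqrtr.
  have -> : q = (p ^+ 2 - Num.sqrt D ^+ 2) / 4 by rewrite sqrtD /D; field.
  by field.
right; split; first by have := sqr_ge0 p; rewrite /D in D_lt0; lra.
exists (- p / 2), (Num.sqrt (- D) / 2) => t.
have sqrtD : Num.sqrt (- D) ^+ 2 = - D by rewrite sqr_sqrtr // oppr_ge0 ltW.
have -> : (Num.sqrt (- D) / 2) ^+ 2 = Num.sqrt (- D) ^+ 2 / 4 by field.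
by rewrite sqrtD /D; field.
Qed.

Section MonicCubic.
Variable R : realType.

(* A real cubic has a real root (odd degree, real closed field). *)
Lemma cubic_real_root (a1 a2 a3 : R) : exists r, cubic a1 a2 a3 r = 0.
Proof.
pose q : {poly R} := Poly [:: a3; a2; a1].
have size_q : (size q < size ('X^3 : {poly R}))%N.
  by rewrite size_polyXn ltnS size_Poly.
have even_size : ~~ odd (size ('X^3 + q)) by rewrite size_polyDl // size_polyXn.
have [r /rootP] := odd_poly_root even_size.
by rewrite !hornerE /= /cubic => root_r; exists r; rewrite -root_r; ring.
Qed.

Lemma cubic_factor_root (a1 a2 a3 r : R) : cubic a1 a2 a3 r = 0 ->
  forall t, cubic a1 a2 a3 t =
    (t - r) * (t ^+ 2 + (a1 + r) * t + (a2 + r * (a1 + r))).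
Proof.
rewrite /cubic => root_r t.
have -> : a3 = - (r ^+ 3 + a1 * r ^+ 2 + a2 * r) by rewrite -[LHS]subr0 -root_r; ring.
ring.
Qed.

Lemma cubic_root_lt (d a1 a2 a3 r : R) : 0 < d ->
  `|a1| < d / 3 -> `|a2| < d ^+ 2 / 3 -> `|a3| < d ^+ 3 / 3 ->
  cubic a1 a2 a3 r = 0 -> r < d.
Proof.
rewrite /cubic => d_gt0 small1 small2 small3 root_r.
rewrite ltNge; apply/negP => le_dr.
have r_gt0 : 0 < r by apply: lt_le_trans le_dr.
(* each lower-order term is dominated by r^3 / 3 *)
have term (x b y : R) : 0 < y -> `|x| < b -> - (x * y) < b * y.
  move=> y_gt0 lt_xb; rewrite -mulNr ltr_pM2r //.
  by apply: le_lt_trans lt_xb; rewrite -normrN ler_norm.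
have le_d2 : d ^+ 2 <= r ^+ 2 by rewrite lerXn2r // nnegrE ltW.
have le_d3 : d ^+ 3 <= r ^+ 3 by rewrite lerXn2r // nnegrE ltW.
have t1 := term _ _ _ (exprn_gt0 2 r_gt0) small1.
have t2 := term _ _ _ r_gt0 small2.
have t1' : d * r ^+ 2 <= r ^+ 3 by rewrite [r ^+ 3]exprS; apply: ler_wpM2r; rewrite ?sqr_ge0.
have t2' : d ^+ 2 * r <= r ^+ 3 by rewrite [r ^+ 3]exprSr; apply: ler_wpM2r => //; apply: ltW.
have := normr_ge0 a3; have := ler_norm (- a3); rewrite normrN.
lra.
Qed.

Lemma cubic_nonneg_factorization (d a1 a2 a3 : R) : 0 < d ->
  `|a1| < d / 3 -> `|a2| < d ^+ 2 / 3 -> `|a3| < d ^+ 3 / 3 ->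
  (forall t, 0 <= t < d -> 0 <= cubic a1 a2 a3 t) ->
  nonpos_root_factorization (cubic a1 a2 a3).
Proof.
move=> d_gt0 small1 small2 small3 nonneg.
have root_lt := cubic_root_lt d_gt0 small1 small2 small3.
have [r root_r] := cubic_real_root a1 a2 a3.
have factor := cubic_factor_root root_r.
have [[x1 [x2 split_q]]|[q_gt0 [x [y sos_q]]]] :=
  monic_quadratic_cases (a1 + r) (a2 + r * (a1 + r)).
  have fac3 t : cubic a1 a2 a3 t = (t - r) * (t - x1) * (t - x2).
    by rewrite factor split_q mulrA.
  apply: (real_roots_factorization _ _ _ fac3 nonneg); apply: root_lt => //.
    by rewrite fac3 [_ - x1]subrr mulr0 mul0r.
  by rewrite fac3 subrr mulr0.
left; exists r, x, y; split; last by move=> t; rewrite factor sos_q mulrC.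
(* the value at 0 is - r q with q > 0 *)
have := nonneg 0; rewrite lexx d_gt0 factor => /(_ isT).
by rewrite expr0n mulr0 !add0r pmulr_lge0 // oppr_ge0.
Qed.

End MonicCubic.

Lemma smooth_on_continuous (R : realType) (V : normedModType R)
    (U : set V) (f : V -> R) (x : V) :
  smooth_on U f -> U x -> {for x, continuous f}.
Proof. by move=> smooth_f Ux; apply: (smooth_f [::]).2. Qed.

Lemma nbhs_product_strip (R : realType) (V : normedModType R)
    (W : set (R * V)) (t0 : R) (x : V) :
  nbhs (t0, x) W ->
  exists2 e : R, 0 < e &
    exists2 B : set V, nbhs x B & forall t y, ball t0 e t -> B y -> W (t, y).
Proof.
case=> -[A B] /= [A_t0 B_x] AB_W.
have [e e_gt0 ball_A] := (nbhs_ballP _ _).1 A_t0.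
by exists e => //; exists B => // t y t_ball By; apply: AB_W; split=> //; apply: ball_A.
Qed.

Lemma near_small (R : realType) (V : normedModType R) (f : V -> R) (x : V)
    (eps : R) :
  {for x, continuous f} -> f x = 0 -> 0 < eps ->
  \forall y \near x, `|f y| < eps.
Proof.
move=> cont_f fx0 eps_gt0.
apply: filterS (@cvgr_dist_lt _ _ _ (nbhs x) _ f (f x) cont_f _ eps_gt0) => y.
by rewrite fx0 sub0r normrN.
Qed.

Theorem lemma4p3 (R : realType) (n : nat) (c T : R)
  (a b : R * 'rV[R]_n -> R) (xib : 'rV[R]_n)
  (e2 : R * 'rV[R]_n -> R) (a1 a2 a3 : 'rV[R]_n -> R)
  (W : set (R * 'rV[R]_n)) (U : set 'rV[R]_n) :
  0 < c -> 0 < T ->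
  (* a, b smooth on (-c,T) x (R^n \ {0}) *)
  smooth_on [set p | - c < p.1 < T /\ p.2 != 0] a ->
  smooth_on [set p | - c < p.1 < T /\ p.2 != 0] b ->
  (* homogeneous of degree 0 in xi *)
  (forall t xi (l : R), - c < t < T -> xi != 0 -> 0 < l ->
     a (t, l *: xi) = a (t, xi) /\ b (t, l *: xi) = b (t, xi)) ->
  (* Delta = 4 a^3 - 27 b^2 >= 0 for t in [0,T) *)
  (forall t xi, 0 <= t < T -> xi != 0 ->
     0 <= 4 * a (t, xi) ^+ 3 - 27 * b (t, xi) ^+ 2) ->
  sqnorm xib = 1 ->
  a (0, xib) = 0 ->
  derive1 (fun t => a (t, xib)) 0 != 0 ->
  (* local factorization Delta = e2 * Delta_bar near (0, xib) *)
  open W -> W (0, xib) ->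
  (forall p, W p -> - c < p.1 < T /\ p.2 != 0) ->
  open U -> U xib ->
  smooth_on W e2 ->
  smooth_on U a1 -> smooth_on U a2 -> smooth_on U a3 ->
  a1 xib = 0 -> a2 xib = 0 -> a3 xib = 0 ->
  (forall p, W p -> 0 < e2 p /\
     4 * a p ^+ 3 - 27 * b p ^+ 2 = e2 p * cubic (a1 p.2) (a2 p.2) (a3 p.2) p.1) ->
  exists V : set 'rV[R]_n, nbhs xib V /\
    forall xi, V xi ->
      (* first case: nu1 real <= 0, nu2 = x + i y complex *)
      (exists nu1 x y : R, nu1 <= 0 /\
         forall t : R, cubic (a1 xi) (a2 xi) (a3 xi) t
                       = ((t - x) ^+ 2 + y ^+ 2) * (t - nu1))
      \/
      (* second case: three real nonpositive roots *)
      (exists nu1 nu2 nu3 : R, [/\ nu1 <= 0, nu2 <= 0 & nu3 <= 0] /\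
         forall t : R, cubic (a1 xi) (a2 xi) (a3 xi) t
                       = (t - nu1) * (t - nu2) * (t - nu3)).
Proof.
move=> _ _ _ _ _ Delta_ge0 _ _ _ open_W W_0 W_dom _ U_xib _
  smooth1 smooth2 smooth3 zero1 zero2 zero3 W_factor.
have [e e_gt0 [B B_xib strip_W]] :=
  nbhs_product_strip (open_nbhs_nbhs (conj open_W W_0)).
have small (f : 'rV[R]_n -> R) (eps : R) : smooth_on U f -> f xib = 0 ->
    0 < eps -> \forall xi \near xib, `|f xi| < eps.
  by move=> smooth_f; apply/near_small/(smooth_on_continuous smooth_f).
exists [set xi | B xi /\ [/\ `|a1 xi| < e / 3, `|a2 xi| < e ^+ 2 / 3
                          & `|a3 xi| < e ^+ 3 / 3]]; split.
  near=> xi; split; first by near: xi.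
  by split; near: xi; apply: small; rewrite // divr_gt0 ?exprn_gt0.
move=> xi [B_xi [small1 small2 small3]].
apply: (cubic_nonneg_factorization e_gt0 small1 small2 small3) => t /andP[t_ge0 t_lt].
have W_t : W (t, xi).
  by apply: strip_W B_xi; rewrite /ball /= sub0r normrN ger0_norm.
have [/andP[_ t_lt_T] xi_neq0] := W_dom _ W_t.
have [e2_gt0 Delta_eq] := W_factor _ W_t.
by have := Delta_ge0 t xi; rewrite Delta_eq t_ge0 t_lt_T pmulr_rge0 //; apply.
Unshelve. all: by end_near.
Qed.
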